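(* For natural concepts $C_1,C_2,C_3,D_1,D_2,D_3,E_1,E_2$: (a) $\{C_1:C_2::D_1:D_2,\ D_1:D_2::E_1:E_2\}\models C_1:C_2::E_1:E_2$; (b) $\{C_1:C_2::D_1:D_2,\ C_2:C_3::D_2:D_3\}\models C_1:C_3::D_1:D_3$.
   Context: Concepts: $C,D::=\top\mid\bot\mid A\mid C\sqcap D\mid \exists r.C\mid N$; natural concepts: $N,N'::=A'\mid N\sqcap N'\mid N\bowtie N'\mid \exists r'.N$, with $A$ a concept name, $A'$ a natural concept name, $r$ a role name, $r'$ an intra-domain role name. A domain constrained interpretation is $\mathfrak{I}=(\mathcal{I},[\mathcal{F}_1,\dots,\mathcal{F}_k],\mathcal{X},\pi,\sim,\mathcal{S})$ where $\mathcal{I}=(\Delta^{\mathcal{I}},\cdot^{\mathcal{I}})$ is a classical DL interpretation, $[\mathcal{F}_1,\dots,\mathcal{F}_k]$ partitions a nonempty finite set $\mathcal{F}$, $\mathcal{X}\subseteq2^{\mathcal{F}}$ with $\mathcal{F}\in\mathcal{X}$, $\pi:\Delta^{\mathcal{I}}\to2^{\mathcal{F}}$, $\sim$ an equivalence relation on $\{1,\dots,k\}$, $\mathcal{S}=\{\sigma_{(s,t)}\mid(s,t)\in\sim\}$ with $\sigma_{(s,t)}:\mathcal{F}_s\to\mathcal{F}_t$ bijections. With $\mathcal{C}=\{G\subseteq\mathcal{F}\mid X\not\subseteq G\ \forall X\in\mathcal{X}\}$ and $\mathcal{C}^i=\{G\in\mathcal{C}\mid G\subseteq\mathcal{F}_i\}$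 it is required: (1) $X\not\subseteq\pi(d)$ for all $d$, $X\in\mathcal{X}$; (2) each $G\in\mathcal{C}$ is $\pi(d)$ for some $d$; (3) $\sigma_{(s,t)}^{-1}=\sigma_{(t,s)}$, $\sigma_{(t,u)}\circ\sigma_{(s,t)}=\sigma_{(s,u)}$; (4) $\sigma_{(i,j)}(G)\in\mathcal{C}$ for $G\in\mathcal{C}^i$, $(i,j)\in\sim$; (5) $\{f,g\}\in\mathcal{X}$ whenever $f\in\mathcal{F}_i$, $g\in\mathcal{F}_j$, $(i,j)\in\sim$, $i\neq j$. $\varphi(C)=\bigcap\{\pi(d)\mid d\in C^{\mathcal{I}}\}$ ($=\mathcal{F}$ if $C^{\mathcal{I}}=\emptyset$). Concepts are interpreted as usual, with $(N\bowtie N')^{\mathcal{I}}=\{d\mid\varphi(N)\cap\varphi(N')\subseteq\pi(d)\}$. An intra-domain relation $r$: there is $\kappa_r:2^{\mathcal{F}}\to2^{\mathcal{F}}$ with $(\exists r.C)^{\mathcal{I}}=\{d\mid\kappa_r(\varphi(C))\subseteq\pi(d)\}$ for all $C$, $\kappa_r(G)=\bigcup_i\kappa_r(G\cap\mathcal{F}_i)$ for $G\in\mathcal{C}$, $\kappa_r(G)\subseteq\mathcal{F}_i$ for $G\in\mathcal{C}^i$, $\kappa_r(\sigma_{(i,j)}(G))=\sigma_{(i,j)}(\kappa_r(G))$ for $(i,j)\in\sim$, $G\in\mathcal{C}^i$, and $\kappa_r(G)\neq\emptyset$ for $G\in\mathcal{C}^i\setminus\{\emptyset\}$. $\delta(C)=\{i\mid\mathcal{F}_i\cap\varphi(C)\neq\emptyset\}$.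 For $U=\{(s_1,t_1),\dots,(s_l,t_l)\}\subseteq\sim$ with pairwise distinct $s_i$ and pairwise distinct $t_i$, the domain translation $\sigma_U:\mathcal{F}\to\mathcal{F}$ maps $f\in\mathcal{F}_{s_i}$ to $\sigma_{(s_i,t_i)}(f)$ and fixes all other features; $\mathrm{src}(U)=\{s_i\}$, $\mathrm{tgt}(U)=\{t_i\}$. $\mu(C,D)$ is the set of $\sigma_U$ with $\varphi(D)=\sigma_U(\varphi(C))$, $\mathrm{src}(U)\subseteq\delta(C)$, $\mathrm{tgt}(U)\cap(\delta(C)\setminus\mathrm{src}(U))=\emptyset$. An analogy assertion $C_1:C_2::D_1:D_2$ (between natural concepts) is satisfied in $\mathfrak{I}$ iff $\mu(C_1,C_2)\cap\mu(D_1,D_2)\neq\emptyset$; a concept inclusion $C\sqsubseteq D$ is satisfied iff $C^{\mathcal{I}}\subseteq D^{\mathcal{I}}$. A TBox is a finite set of concept inclusions and analogy assertions. $\mathfrak{I}$ is a model of a TBox $\mathcal{T}$ if it satisfies all its elements, every natural concept $N$ in $\mathcal{T}$ satisfies $N^{\mathcal{I}}=\{d\mid\varphi(N)\subseteq\pi(d)\}$, and every intra-domain role name is interpreted as an intra-domain relation. $\mathcal{T}\models\psi$ means every model of $\mathcal{T}$ satisfies $\psi$. *)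

From mathcomp Require Import all_boot.
From mathcomp Require Import boolp classical_sets.
From Stdlib Require List.

Set Implicit Arguments.
Unset Strict Implicit.
Unset Printing Implicit Defensive.

Local Open Scope classical_set_scope.

(* Syntax.  CN = concept names, RN = role names.  Natural concept names
   and intra-domain role names are distinguished subsets, given by
   predicates isNat / isIntra of the signature.                        *)

Section Syntax.
Variables (CN RN : Type).

Inductive nconcept : Type :=
  | NName of CN
  | NAnd  of nconcept & nconcept
  | NJoin of nconcept & nconcept
  | NEx   of RN & nconcept.

Inductive concept : Type :=
  | CTop
  | CBot
  | CName of CN
  | CAnd  of concept & concept
  | CEx   of RN & concept
  | CNat  of nconcept.

Fixpoint wf_nc (isNat : CN -> Prop) (isIntra : RN -> Prop) (N : nconcept)
  : Prop :=
  match N with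
  | NName A => isNat A
  | NAnd N1 N2 => wf_nc isNat isIntra N1 /\ wf_nc isNat isIntra N2
  | NJoin N1 N2 => wf_nc isNat isIntra N1 /\ wf_nc isNat isIntra N2
  | NEx r N1 => isIntra r /\ wf_nc isNat isIntra N1
  end.

(* TBox elements: concept inclusions and analogy assertions
   N1 : N2 :: M1 : M2 between natural concepts *)
Inductive axiom : Type :=
  | Incl of concept & concept
  | Analogy of nconcept & nconcept & nconcept & nconcept.

Definition tbox := seq axiom.

Fixpoint nsubs (N : nconcept) : seq nconcept :=
  N :: match N with
       | NName _ => [::]
       | NAnd N1 N2 => nsubs N1 ++ nsubs N2
       | NJoin N1 N2 => nsubs N1 ++ nsubs N2
       | NEx _ N1 => nsubs N1
       end.

Fixpoint csubs (C : concept) : seq nconcept :=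
  match C with
  | CTop | CBot | CName _ => [::]
  | CAnd C1 C2 => csubs C1 ++ csubs C2
  | CEx _ C1 => csubs C1
  | CNat N => nsubs N
  end.

Definition axsubs (a : axiom) : seq nconcept :=
  match a with
  | Incl C D => csubs C ++ csubs D
  | Analogy N1 N2 M1 M2 => nsubs N1 ++ nsubs N2 ++ nsubs M1 ++ nsubs M2
  end.

Definition occurs_in (T : tbox) (N : nconcept) : Prop :=
  exists2 a, List.In a T & List.In N (axsubs a).

End Syntax.

(* Domain constrained interpretations.
   D = domain Δ, F = feature set (a finite type), k = number of blocks;
   the partition [F_1,...,F_k] is given by blk : F -> 'I_k.           *)

Record dcinterp (CN RN D : Type) (F : finType) (k : nat) := DCInterp {
  cI  : CN -> set D;
  rI  : RN -> D -> D -> Prop;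
  blk : F -> 'I_k;
  Xs  : set (set F);
  pi  : D -> set F;
  eqv : 'I_k -> 'I_k -> Prop;
  sig : 'I_k -> 'I_k -> F -> F       (* σ_(s,t), relevant for s ∼ t on F_s *)
}.

Section Semantics.
Variables (CN RN D : Type) (F : finType) (k : nat).
Variable I : dcinterp CN RN D F k.

Definition block (i : 'I_k) : set F := [set f | blk I f = i].

Definition CC (G : set F) : Prop := forall Y, Xs I Y -> ~ (Y `<=` G).
Definition CCi (i : 'I_k) (G : set F) : Prop := CC G /\ G `<=` block i.

(* φ of a set of individuals: ⋂ {π(d) | d ∈ S}, = F if S = ∅ *)
Definition phiS (S : set D) : set F := [set f | forall d, S d -> pi I d f].

Fixpoint nint (N : nconcept CN RN) : set D :=
  match N with
  | NName A => cI I A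
  | NAnd N1 N2 => nint N1 `&` nint N2
  | NJoin N1 N2 => [set d | phiS (nint N1) `&` phiS (nint N2) `<=` pi I d]
  | NEx r N1 => [set d | exists e, rI I r d e /\ nint N1 e]
  end.

Fixpoint cint (C : concept CN RN) : set D :=
  match C with
  | CTop => setT
  | CBot => set0
  | CName A => cI I A
  | CAnd C1 C2 => cint C1 `&` cint C2
  | CEx r C1 => [set d | exists e, rI I r d e /\ cint C1 e]
  | CNat N => nint N
  end.

Definition is_dci : Prop :=
  inhabited D /\
  (exists f : F, True) /\
  (forall i : 'I_k, exists f, blk I f = i) /\
  Xs I setT /\
  (* (1) *)
  (forall d Y, Xs I Y -> ~ (Y `<=` pi I d)) /\
  (forall G, CC G -> exists d, pi I d = G) /\
  (forall i, eqv I i i) /\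
  (forall i j, eqv I i j -> eqv I j i) /\
  (forall i j l, eqv I i j -> eqv I j l -> eqv I i l) /\
  (forall s t, eqv I s t ->
     [/\ (forall f, blk I f = s -> blk I (sig I s t f) = t),
         (forall f g, blk I f = s -> blk I g = s ->
             sig I s t f = sig I s t g -> f = g) &
         (forall g, blk I g = t -> exists2 f, blk I f = s & sig I s t f = g)]) /\
  (forall s t f, eqv I s t -> blk I f = s -> sig I t s (sig I s t f) = f) /\
  (forall s t u f, eqv I s t -> eqv I t u -> blk I f = s ->
     sig I t u (sig I s t f) = sig I s u f) /\
  (forall i j G, eqv I i j -> CCi i G -> CC (sig I i j @` G)) /\
  (* (5) *)
  (forall i j f g, eqv I i j -> i <> j -> blk I f = i -> blk I g = j ->
     Xs I [set x | x = f \/ x = g]).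

Definition intra_rel (r : RN) : Prop :=
  exists kappa : set F -> set F,
    [/\ (forall C : concept CN RN,
           cint (CEx r C) = [set d | kappa (phiS (cint C)) `<=` pi I d]),
        (forall G, CC G ->
           kappa G = [set f | exists i : 'I_k, kappa (G `&` block i) f]),
        (forall i G, CCi i G -> kappa G `<=` block i),
        (forall i j G, eqv I i j -> CCi i G ->
           kappa (sig I i j @` G) = sig I i j @` kappa G) &
        (forall i G, CCi i G -> G <> set0 -> kappa G <> set0)].

Definition delta (S : set D) : set 'I_k :=
  [set i | exists f, blk I f = i /\ phiS S f].

Definition validU (U : {set 'I_k * 'I_k}) : Prop :=
  [/\ (forall s t, (s, t) \in U -> eqv I s t),
      (forall s t t', (s, t) \in U -> (s, t') \in U -> t = t') &
      (forall s s' t, (s, t) \in U -> (s', t) \in U -> s = s')].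

Definition sigmaU (U : {set 'I_k * 'I_k}) (f : F) : F :=
  match [pick t | (blk I f, t) \in U] with
  | Some t => sig I (blk I f) t f
  | None => f
  end.

Definition srcU (U : {set 'I_k * 'I_k}) : set 'I_k :=
  [set s | exists t, (s, t) \in U].
Definition tgtU (U : {set 'I_k * 'I_k}) : set 'I_k :=
  [set t | exists s, (s, t) \in U].

(* g ∈ μ(C, D), with C, D given by their extensions S, T *)
Definition mu (S T : set D) (g : F -> F) : Prop :=
  exists U : {set 'I_k * 'I_k},
    [/\ validU U,
        (forall f, g f = sigmaU U f),
        phiS T = sigmaU U @` phiS S,
        srcU U `<=` delta S &
        tgtU U `&` (delta S `\` srcU U) = set0].

Definition sat (a : axiom CN RN) : Prop :=
  match a with
  | Incl C1 C2 => cint C1 `<=` cint C2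
  | Analogy N1 N2 M1 M2 =>
      exists g, mu (nint N1) (nint N2) g /\ mu (nint M1) (nint M2) g
  end.

Definition is_model (isIntra : RN -> Prop) (T : tbox CN RN) : Prop :=
  [/\ is_dci,
      (forall a, List.In a T -> sat a),
      (forall N, occurs_in T N -> nint N = [set d | phiS (nint N) `<=` pi I d]) &
      (forall r, isIntra r -> intra_rel r)].

End Semantics.

Definition entails (CN RN : Type) (isIntra : RN -> Prop)
  (T : tbox CN RN) (psi : axiom CN RN) : Prop :=
  forall (D : Type) (F : finType) (k : nat) (I : dcinterp CN RN D F k),
    is_model I isIntra T -> sat I psi.

From Pilot Require Import Defs.
From mathcomp Require Import all_boot.
From mathcomp Require Import boolp classical_sets.

(* A domain translation [sigma_U] is determined by its block map [tau], which
   sends each source block of [U] to its target and fixes every other block;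
   [mu C D] then becomes a condition on [tau] alone, and an analogy assertion
   asks for one block map serving both pairs.
   For (b), composing the block maps of the two assertions on [delta C1]
   (resp. [delta D1]) yields a translation from C1 to C3 (resp. from D1 to D3),
   and the two composites agree: each fixes the blocks of [delta C1] outside
   [delta D1] and vice versa.
   For (a), conditions (1) and (5) force [phi D1] to be either all of [F] or
   to meet only pairwise inequivalent blocks.  In the second case the
   translation from D1 to D2 is unique, so both assertions use the same block
   map.  If [phi D1 = F], either C1 (resp. E1) has the same features as D1, or
   its features meet pairwise inequivalent blocks, and then a block map that
   also translates [F] must be the identity. *)

Set Implicit Arguments.
Unset Strict Implicit.
Unset Printing Implicit Defensive.
Local Open Scope classical_set_scope.

Section DomainTranslations.
Variables (CN RN D : Type) (F : finType) (k : nat) (M : dcinterp CN RN D F k).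
Hypothesis dciM : is_dci M.

Local Notation blk := (Defs.blk M).
Local Notation eqv := (Defs.eqv M).
Local Notation sig := (Defs.sig M).

Lemma blk_surj i : exists f, blk f = i.
Proof. by case: dciM => _ [_ [h _]]. Qed.

Lemma Xs_not_sub_pi d Y : Xs M Y -> ~ Y `<=` Defs.pi M d.
Proof. by case: dciM => _ [_ [_ [_ [h _]]]]; apply: h. Qed.

Lemma eqv_refl i : eqv i i.
Proof. by case: dciM => _ [_ [_ [_ [_ [_ [h _]]]]]]. Qed.

Lemma eqv_sym i j : eqv i j -> eqv j i.
Proof. by case: dciM => _ [_ [_ [_ [_ [_ [_ [h _]]]]]]]; apply: h. Qed.

Lemma eqv_trans i j l : eqv i j -> eqv j l -> eqv i l.
Proof. by case: dciM => _ [_ [_ [_ [_ [_ [_ [_ [h _]]]]]]]]; apply: h. Qed.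

Lemma blk_sig s t f : eqv s t -> blk f = s -> blk (sig s t f) = t.
Proof.
move=> st; case: dciM => _ [_ [_ [_ [_ [_ [_ [_ [_ [h _]]]]]]]]].
by case: (h _ _ st) => + _ _; apply.
Qed.

Lemma sigK s t f : eqv s t -> blk f = s -> sig t s (sig s t f) = f.
Proof. by case: dciM => _ [_ [_ [_ [_ [_ [_ [_ [_ [_ [h _]]]]]]]]]]; apply: h. Qed.

Lemma sig_comp s t u f : eqv s t -> eqv t u -> blk f = s ->
  sig t u (sig s t f) = sig s u f.
Proof.
by case: dciM => _ [_ [_ [_ [_ [_ [_ [_ [_ [_ [_ [h _]]]]]]]]]]]; apply: h.
Qed.

Lemma Xs_pair i j f g : eqv i j -> i <> j -> blk f = i -> blk g = j ->
  Xs M [set x | x = f \/ x = g].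
Proof.
by case: dciM => _ [_ [_ [_ [_ [_ [_ [_ [_ [_ [_ [_ [_ h]]]]]]]]]]]]; apply: h.
Qed.

Lemma sig_id s f : blk f = s -> sig s s f = f.
Proof.
move=> fs; rewrite -[RHS](sigK (eqv_refl s) fs).
by rewrite (sig_comp (eqv_refl s) (eqv_refl s) fs).
Qed.

Definition blocks (A : set F) : set 'I_k := [set i | exists f, blk f = i /\ A f].

Definition sparse (X : set 'I_k) : Prop :=
  forall s s', X s -> X s' -> eqv s s' -> s = s'.

Definition transl (tau : 'I_k -> 'I_k) (f : F) : F := sig (blk f) (tau (blk f)) f.

Section Transl.
Variables (tau tau' : 'I_k -> 'I_k).
Hypotheses (eqv_tau : forall s, eqv s (tau s)) (eqv_tau' : forall s, eqv s (tau' s)).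

Lemma blk_transl f : blk (transl tau f) = tau (blk f).
Proof. exact: blk_sig. Qed.

Lemma transl_comp f : transl tau' (transl tau f) = transl (tau' \o tau) f.
Proof. by rewrite [in LHS]/transl blk_transl; apply: sig_comp. Qed.

Lemma transl_inj : transl tau =1 transl tau' -> tau = tau'.
Proof.
move=> E; apply/funext => s; have [f <-] := blk_surj s.
by rewrite -blk_transl E (blk_sig (eqv_tau' _)).
Qed.

Lemma blocks_transl A : blocks (transl tau @` A) = tau @` blocks A.
Proof.
apply/seteqP; split=> s.
- by case=> _ [<- [f Af <-]]; exists (blk f); [exists f | rewrite blk_transl].
- case=> _ [f [<- Af]] <-; exists (transl tau f).
  by split; [rewrite blk_transl | exists f].
Qed.

End Transl.

Lemma blocks_setT : blocks setT = setT.
Proof. by apply/seteqP; split=> // s _; have [f fs] := blk_surj s; exists f. Qed.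

(* [tau] is the block map of a domain translation: a block [s] is a source of
   [U] iff [tau s <> s], and then [(s, tau s) \in U].  The fields are the
   conditions of [mu] for [A = phi C] and [B = phi D], with
   [delta C = blocks (phi C)]. *)
Record translates (A B : set F) (tau : 'I_k -> 'I_k) : Prop := Translates {
  translates_eqv : forall s, eqv s (tau s);
  translates_inj : forall s s', tau s <> s -> tau s' <> s' -> tau s = tau s' -> s = s';
  translates_moved : forall s, tau s <> s -> blocks A s;
  translates_target : forall s s', blocks A s -> tau s' = s -> s' <> s -> tau s <> s;
  translates_img : B = transl tau @` A }.

Definition tau_of (U : {set 'I_k * 'I_k}) (s : 'I_k) : 'I_k :=
  if [pick t | (s, t) \in U] is Some t then t else s.

Definition U_of (tau : 'I_k -> 'I_k) : {set 'I_k * 'I_k} :=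
  [set p | (p.2 == tau p.1) && (p.1 != p.2)].

Lemma sigmaU_tau_of U : sigmaU M U = transl (tau_of U).
Proof.
apply/funext => f; rewrite /sigmaU /transl /tau_of.
by case: pickP => // _; rewrite sig_id.
Qed.

Lemma sigmaU_U_of tau : sigmaU M (U_of tau) = transl tau.
Proof.
apply/funext => f; rewrite /sigmaU /transl; case: pickP => [t | none].
  by rewrite inE /= => /andP [/eqP -> _].
have [-> | ne] := eqVneq (tau (blk f)) (blk f); first by rewrite sig_id.
by have := none (tau (blk f)); rewrite inE /= eqxx eq_sym ne.
Qed.

Lemma mu_translates S T g : mu M S T g ->
  exists2 tau, translates (phiS M S) (phiS M T) tau & g = transl tau.
Proof.
case=> U [[Ueqv _ Uinj] gE img src tgt].
have tauU s : tau_of U s <> s -> (s, tau_of U s) \in U.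
  by rewrite /tau_of; case: pickP.
exists (tau_of U); last by apply/funext => f; rewrite gE sigmaU_tau_of.
split.
- move=> s; rewrite /tau_of; case: pickP => [t /Ueqv // | _]; exact: eqv_refl.
- by move=> s s' /tauU sU /tauU + e; rewrite -e; apply: Uinj.
- by move=> s /tauU sU; apply: src; exists (tau_of U s).
- move=> s s' As ts's s's.
  have s'U : (s', s) \in U by rewrite -ts's; apply: tauU; rewrite ts's => /esym.
  have [t st] : srcU U s.
    apply: contrapT => nsrc.
    have : (tgtU U `&` (delta M S `\` srcU U)) s by split; [exists s' | ].
    by rewrite tgt.
  rewrite /tau_of; case: pickP => [t' st' ts | /(_ t)]; last by rewrite st.
  by apply: s's; rewrite ts in st'; apply: Uinj s'U st'.
- by rewrite img sigmaU_tau_of.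
Qed.

Lemma translates_mu S T tau :
  translates (phiS M S) (phiS M T) tau -> mu M S T (transl tau).
Proof.
case=> teqv tinj tmoved ttarget timg.
have inU s t : ((s, t) \in U_of tau) = (t == tau s) && (s != t) by rewrite inE.
exists (U_of tau); split; rewrite ?sigmaU_U_of //.
- split.
  + by move=> s t; rewrite inU => /andP [/eqP -> _].
  + by move=> s t t'; rewrite !inU => /andP [/eqP -> _] /andP [/eqP -> _].
  + move=> s s' t; rewrite !inU => /andP [/eqP -> ms] /andP [/eqP e ms'].
    by apply: tinj => //; apply/eqP; rewrite eq_sym // -e.
- move=> s [t]; rewrite inU => /andP [/eqP -> ms].
  by apply: tmoved; apply/eqP; rewrite eq_sym.
- apply/seteqP; split=> // t [[s]]; rewrite inU => /andP [/eqP ts /eqP ms] [At nsrc].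
  apply: nsrc; exists (tau t); rewrite inU eqxx /=; apply/eqP => tt.
  exact: ttarget At (esym ts) ms (esym tt).
Qed.

Lemma sat_analogyP N1 N2 N3 N4 :
  sat M (Analogy N1 N2 N3 N4) <->
  exists tau, translates (phiS M (nint M N1)) (phiS M (nint M N2)) tau /\
              translates (phiS M (nint M N3)) (phiS M (nint M N4)) tau.
Proof.
split=> [[g [/mu_translates [t1 tr1 ->] /mu_translates [t2 tr2 e]]] | [tau [tr1 tr2]]].
  exists t1; split=> //.
  suff -> : t1 = t2 by [].
  by apply: transl_inj (translates_eqv tr1) (translates_eqv tr2) _ => f; rewrite e.
by exists (transl tau); split; apply: translates_mu.
Qed.

Lemma translates_fix A B tau s : translates A B tau -> ~ blocks A s -> tau s = s.
Proof. by case=> _ _ moved _ _ nAs; apply: contrapT => /moved. Qed.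

Lemma translates_inj_on A B tau : translates A B tau ->
  forall s s', blocks A s -> blocks A s' -> tau s = tau s' -> s = s'.
Proof.
case=> _ inj _ target _ s s' As As' e.
have [-> //|ne] := eqVneq s s'; exfalso.
have [fs | ms] := eqVneq (tau s) s; have [fs' | ms'] := eqVneq (tau s') s'.
- by move/eqP: ne; rewrite -fs e fs'.
- by apply: (target s s') => //; [rewrite -e | apply/eqP; rewrite eq_sym].
- by apply: (target s' s) => //; [rewrite e | apply/eqP].
- by move/eqP: ne; apply; apply: inj => //; apply/eqP.
Qed.

Lemma translates_unique A B t1 t2 : sparse (blocks A) ->
  translates A B t1 -> translates A B t2 -> t1 = t2.
Proof.
move=> spA tr1 tr2; apply/funext => s.
have [[a [<- Aa]] | nAs] := pselect (blocks A s); last first.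
  by rewrite (translates_fix tr1 nAs) (translates_fix tr2 nAs).
have e1 := translates_eqv tr1; have e2 := translates_eqv tr2.
have : (transl t2 @` A) (transl t1 a).
  by rewrite -(translates_img tr2) (translates_img tr1); exists a.
case=> b Ab /(congr1 blk); rewrite (blk_transl e1) (blk_transl e2) => e.
suff ba : blk b = blk a by rewrite -e ba.
apply: spA; [by exists b | by exists a |].
by apply: eqv_trans (e2 _) _; rewrite e; apply/eqv_sym/e1.
Qed.

Lemma translates_setT_id A B B' tau : sparse (blocks A) ->
  translates setT B tau -> translates A B' tau -> tau = id.
Proof.
move=> spA trT trA; apply/funext => s; apply: contrapT => ms.
have As := translates_moved trA ms.
have nAts : ~ blocks A (tau s).
  by move=> Ats; apply: ms; rewrite -(spA _ _ As Ats (translates_eqv trA s)).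
apply: (translates_target trT _ erefl) (translates_fix trA nAts).
- by rewrite blocks_setT.
- by move=> ts; apply: ms.
Qed.

Lemma phiS_cases S : phiS M S = setT \/ sparse (blocks (phiS M S)).
Proof.
have [[d Sd] | nS] := pselect (exists d, S d); [right | left].
  move=> s s' [f [<- Sf]] [g [<- Sg]] fg; apply: contrapT => ne.
  apply: (Xs_not_sub_pi (Xs_pair fg ne erefl erefl)).
  by move=> x [->|->]; [exact: Sf Sd | exact: Sg Sd].
by apply/seteqP; split=> // f _ d Sd; case: nS; exists d.
Qed.

Lemma translates_via A1 A2 B1 B2 C1 C2 t1 t2 :
  (A1 = setT \/ sparse (blocks A1)) -> (B1 = setT \/ sparse (blocks B1)) ->
  (C1 = setT \/ sparse (blocks C1)) ->
  translates A1 A2 t1 -> translates B1 B2 t1 ->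
  translates B1 B2 t2 -> translates C1 C2 t2 ->
  exists tau, translates A1 A2 tau /\ translates C1 C2 tau.
Proof.
move=> hA [B1T | spB] hC trA trB1 trB2 trC; last first.
  by exists t1; rewrite (translates_unique spB trB2 trB1) in trC.
case: hA => [A1T | spA].
  have eA1 : A1 = B1 by rewrite A1T B1T.
  by exists t2; rewrite eA1 (translates_img trA) eA1 -(translates_img trB1).
case: hC => [C1T | spC].
  have eC1 : C1 = B1 by rewrite C1T B1T.
  by exists t1; rewrite eC1 (translates_img trC) eC1 -(translates_img trB2).
rewrite B1T in trB1 trB2; exists t1; split=> //.
by rewrite (translates_setT_id spA trB1 trA) -(translates_setT_id spC trB2 trC).
Qed.

Definition comp_on (X : set 'I_k) (t1 t2 : 'I_k -> 'I_k) (s : 'I_k) : 'I_k :=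
  if pselect (X s) then t2 (t1 s) else s.

Lemma translates_comp A1 A2 A3 t1 t2 :
  translates A1 A2 t1 -> translates A2 A3 t2 ->
  translates A1 A3 (comp_on (blocks A1) t1 t2).
Proof.
move=> tr1 tr2; set tau := comp_on _ _ _.
have e1 := translates_eqv tr1; have e2 := translates_eqv tr2.
have tauE s : blocks A1 s -> tau s = t2 (t1 s).
  by rewrite /tau /comp_on; case: pselect.
have moved s : tau s <> s -> blocks A1 s by rewrite /tau /comp_on; case: pselect.
have inj s s' : blocks A1 s -> blocks A1 s' -> tau s = tau s' -> s = s'.
  move=> As As'; rewrite !tauE // => e; apply: (translates_inj_on tr1 As As').
  apply: (translates_inj_on tr2 _ _ e);
    by rewrite (translates_img tr1) blocks_transl //; exact: imageP.
split=> //.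
- move=> s; rewrite /tau /comp_on; case: pselect => /= _; last exact: eqv_refl.
  exact: eqv_trans (e1 s) (e2 _).
- by move=> s s' /moved As /moved As'; apply: inj.
- move=> s s' As ts's s's fs.
  have As' : blocks A1 s' by apply: moved; rewrite ts's => /esym.
  by apply: s's; apply: inj; rewrite // ts's fs.
- rewrite (translates_img tr2) (translates_img tr1) image_comp.
  apply: eq_imagel => f A1f /=; rewrite transl_comp // /transl tauE //.
  by exists f.
Qed.

Lemma translates_comp_fix A1 A2 B1 B2 B3 t1 t2 s :
  translates A1 A2 t1 -> translates B1 B2 t1 -> translates B2 B3 t2 ->
  blocks A1 s -> ~ blocks B1 s -> t2 (t1 s) = s.
Proof.
move=> trA trB1 trB2 As nBs; rewrite (translates_fix trB1 nBs).
apply: contrapT => /(translates_moved trB2).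
rewrite (translates_img trB1) blocks_transl; last exact: translates_eqv trB1.
case=> s' Bs' ts's; apply: (translates_target trA As ts's) (translates_fix trB1 nBs).
by move=> s's; apply: nBs; rewrite -s's.
Qed.

Lemma comp_on_eq A1 A2 A3 B1 B2 B3 t1 t2 :
  translates A1 A2 t1 -> translates A2 A3 t2 ->
  translates B1 B2 t1 -> translates B2 B3 t2 ->
  comp_on (blocks A1) t1 t2 = comp_on (blocks B1) t1 t2.
Proof.
move=> trA1 trA2 trB1 trB2; apply/funext => s; rewrite /comp_on.
case: pselect => /= As; case: pselect => /= Bs //.
- exact: translates_comp_fix trA1 trB1 trB2 As Bs.
- exact/esym/(translates_comp_fix trB1 trA1 trA2 Bs As).
Qed.

End DomainTranslations.

Theorem proposition6 (CN RN : Type) (isNat : CN -> Prop) (isIntra : RN -> Prop)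
  (C1 C2 C3 D1 D2 D3 E1 E2 : nconcept CN RN) :
  wf_nc isNat isIntra C1 -> wf_nc isNat isIntra C2 -> wf_nc isNat isIntra C3 ->
  wf_nc isNat isIntra D1 -> wf_nc isNat isIntra D2 -> wf_nc isNat isIntra D3 ->
  wf_nc isNat isIntra E1 -> wf_nc isNat isIntra E2 ->
  entails isIntra [:: Analogy C1 C2 D1 D2; Analogy D1 D2 E1 E2]
                  (Analogy C1 C2 E1 E2) /\
  entails isIntra [:: Analogy C1 C2 D1 D2; Analogy C2 C3 D2 D3]
                  (Analogy C1 C3 D1 D3).
Proof.
move=> _ _ _ _ _ _ _ _; split=> D F k M [dciM satM _ _].
- have /(sat_analogyP dciM) [t1 [trC trD]] := satM _ (or_introl erefl).
  have /(sat_analogyP dciM) [t2 [trD' trE]] := satM _ (or_intror (or_introl erefl)).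
  apply/(sat_analogyP dciM); have cases := phiS_cases dciM.
  exact: (translates_via dciM (cases _) (cases _) (cases _) trC trD trD' trE).
- have /(sat_analogyP dciM) [t1 [trC1 trD1]] := satM _ (or_introl erefl).
  have /(sat_analogyP dciM) [t2 [trC2 trD2]] := satM _ (or_intror (or_introl erefl)).
  apply/(sat_analogyP dciM).
  exists (comp_on (blocks M (phiS M (nint M C1))) t1 t2); split.
    exact: (translates_comp dciM trC1 trC2).
  rewrite (comp_on_eq dciM trC1 trC2 trD1 trD2).
  exact: (translates_comp dciM trD1 trD2).
Qed.
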